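(* Let $q$ be an odd prime power, $d$ a positive integer, and $\varphi_d$ the coloring defined below. Let $\{s_1,\dots,s_t\} \subseteq (\mathbb{F}_q^* )^d$ be a set of $t$ linearly independent vectors and let $a,b \in (\mathbb{F}_q^* )^d$ (with $a\neq b$, $a\ne s_i$, $b\ne s_i$ for all $i$) be such that there are colors $\alpha,\beta\in C_d$ with $\varphi_d(a,b) = \varphi_d(a,s_i) = \alpha$ and $\varphi_d(b,s_i) = \beta$ for each $1 \le i \le t$. Then $s_1,\dots,s_t,b$ are linearly independent.
   Context: $\mathbb{F}_q^*$ is the set of nonzero elements of $\mathbb{F}_q$, endowed with an arbitrary fixed linear order; $(\mathbb{F}_q^* )^d$ is ordered lexicographically with respect to it. Let $C_d = \mathrm{DOT} \sqcup \mathrm{ZERO}\sqcup\mathrm{UP}\sqcup\mathrm{DOWN}$, where $\mathrm{DOT} = \mathbb{F}_q^*$ and ZERO, UP, DOWN are three disjoint copies of $\{1,\dots,d\}\times \mathbb{F}_q$. For distinct $x<y$ in $(\mathbb{F}_q^* )^d$, let $i$ be the first coordinate where $x=(x_1,\dots,x_d)$ and $y$ differ, and let $x\cdot y$ be the standard dot product; define $\varphi_d(x,y)=\varphi_d(y,x)$ to be $(i,x_i+y_i)$ in ZERO if $x\cdot y=0$; $(i,x_i+y_i)$ in UP if $x\cdot y\ne 0$ and $x\cdot y=x\cdot x$; $(i,x_i+y_i)$ in DOWN if $x\cdot y\notin\{0,x\cdot x\}$ and $x\cdot y=y\cdot y$; and $x\cdot y\in \mathrm{DOT}$ otherwise. 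*)

From HB Require Import structures.
From mathcomp Require Import all_boot all_order all_algebra all_field.
Set Implicit Arguments. Unset Strict Implicit. Unset Printing Implicit Defensive.
Import GRing.Theory.
Local Open Scope ring_scope.

Definition allnz (F : fieldType) (d : nat) (x : 'rV[F]_d) : bool :=
  [forall i : 'I_d, x 0 i != 0].

Definition dotv (F : fieldType) (d : nat) (x y : 'rV[F]_d) : F :=
  \sum_(i < d) x 0 i * y 0 i.

Definition strict_linear_order_on_units (F : fieldType) (lt : rel F) : Prop :=
  [/\ (forall x, x != 0 -> ~~ lt x x),
      (forall x y z, x != 0 -> y != 0 -> z != 0 -> lt x y -> lt y z -> lt x z)
    & (forall x y, x != 0 -> y != 0 -> x != y -> lt x y || lt y x)].

Inductive color (F : fieldType) (d : nat) : Type :=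
| DOT  of F
| ZERO of 'I_d & F
| UP   of 'I_d & F
| DOWN of 'I_d & F.

(* first coordinate where x and y differ (unique, hence pick is canonical) *)
Definition fdiff (F : finFieldType) (d : nat) (x y : 'rV[F]_d) : option 'I_d :=
  [pick i : 'I_d | (x 0 i != y 0 i) &&
                   [forall j : 'I_d, (j < i)%N ==> (x 0 j == y 0 j)]].

(* color of the pair x < y (lexicographically), i the first differing coord. *)
Definition phi0 (F : finFieldType) (d : nat) (x y : 'rV[F]_d) (i : 'I_d)
  : color F d :=
  let s := x 0 i + y 0 i in
  if dotv x y == 0 then ZERO i s
  else if dotv x y == dotv x x then UP i s
  else if dotv x y == dotv y y then DOWN i s
  else DOT d (dotv x y).

(* phi_d(x,y) = phi_d(y,x), defined for x <> y (default value otherwise) *)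
Definition phi (F : finFieldType) (lt : rel F) (d : nat) (x y : 'rV[F]_d)
  : color F d :=
  match fdiff x y with
  | Some i => if lt (x 0 i) (y 0 i) then phi0 x y i else phi0 y x i
  | None => DOT d 0
  end.

From HB Require Import structures.
From mathcomp Require Import all_boot all_order all_algebra all_field.
Local Open Scope ring_scope.
Import GRing.Theory.
Set Implicit Arguments. Unset Strict Implicit.

(* Suppose b = \sum_i l_i s_i.  The color alpha puts b and every s_i on one
   affine hyperplane {y | x . y = c} with c != 0 (x = a for a DOT color,
   x = e_k for a coordinate color, using b_k != 0); applying y |-> x . y to
   b = \sum_i l_i s_i gives \sum_i l_i = 1, so b is an affine combination of
   the s_i.  The color beta puts every s_i on an affine hyperplane missing b
   (x = b since b . s_i != b . b, or x = e_k since s_ik = t - b_k != b_k),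
   which then has to contain b as well. *)

Section SpanScalar.
Variables (K : fieldType) (V : vectType K).

Lemma scalar_span_coord_sum n (X : n.-tuple V) (f : {scalar V}) v c :
  v \in <<X>>%VS -> {in X, forall x, f x = c} ->
  f v = (\sum_i coord X i v) * c.
Proof.
move=> vX fX; rewrite {1}(coord_span vX) linear_sum mulr_suml.
by apply: eq_bigr => i _; rewrite linearZ /= fX // mem_nth ?size_tuple.
Qed.

Lemma affine_span_scalar_const (X : seq V) (f g : {scalar V}) v x0 :
  v \in <<X>>%VS -> x0 \in X -> f v != 0 ->
  {in X, forall x, f x = f v} -> {in X, forall x, g x = g x0} -> g v = g x0.
Proof.
move=> vX x0X fv_nz fX gX.
have vX' : v \in <<in_tuple X>>%VS by [].
have := scalar_span_coord_sum vX' fX.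
rewrite -{1}[f v]mul1r => /(mulIf fv_nz) coord_sum1.
by rewrite (scalar_span_coord_sum vX' gX) -coord_sum1 mul1r.
Qed.

End SpanScalar.

Section DotProduct.
Variables (F : fieldType) (d : nat).
Implicit Types x y : 'rV[F]_d.

Lemma dotvC x y : dotv x y = dotv y x.
Proof. by apply: eq_bigr => i _; rewrite mulrC. Qed.

Lemma dotv_is_scalar x : scalar (dotv x).
Proof.
move=> c y z; rewrite /dotv mulr_sumr -big_split.
by apply: eq_bigr => i _; rewrite !mxE mulrDr mulrCA.
Qed.

HB.instance Definition _ x :=
  GRing.isLinear.Build F 'rV[F]_d F _ (dotv x) (dotv_is_scalar x).

Lemma dotv_delta (k : 'I_d) y : dotv (delta_mx 0 k) y = y 0 k.
Proof.
rewrite /dotv (bigD1 k) //= big1 => [|i ik]; first by rewrite mxE !eqxx mul1r addr0.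
by rewrite mxE eqxx (negPf ik) mul0r.
Qed.

Lemma allnz_neq0 x : (0 < d)%N -> allnz x -> x != 0.
Proof.
move=> d_gt0 /forallP/(_ (Ordinal d_gt0)); apply: contraNneq => ->.
by rewrite mxE.
Qed.

End DotProduct.

Section Colors.
Variables (F : finFieldType) (d : nat).
Implicit Types x y : 'rV[F]_d.

(* The information carried by a color that is symmetric in x and y; for the
   coordinate colors, minimality of the first differing index k is dropped. *)
Definition color_spec x y (c : color F d) : Prop :=
  match c with
  | DOT e => [/\ dotv x y = e, e != 0, e != dotv x x & e != dotv y y]
  | ZERO k t | UP k t | DOWN k t => x 0 k + y 0 k = t /\ x 0 k != y 0 k
  end.

Lemma color_specC x y c : color_spec x y c -> color_spec y x c.
Proof.
case: c => [e [xy e_nz ex ey]|k t|k t|k t] /=; first by split; rewrite // dotvC.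
all: by rewrite addrC eq_sym.
Qed.

Lemma color_spec_phi0 x y k : x 0 k != y 0 k -> color_spec x y (phi0 x y k).
Proof.
move=> xy_k; rewrite /phi0.
by do 3?case: eqP => [//|/eqP ?]; split; rewrite // eq_sym.
Qed.

Lemma fdiff_neq x y k : fdiff x y = Some k -> x 0 k != y 0 k.
Proof. by rewrite /fdiff; case: pickP => // i /andP[xy_i _] [<-]. Qed.

Lemma fdiff_some x y : x != y -> exists k, fdiff x y = Some k.
Proof.
move=> xy; rewrite /fdiff; case: pickP => [k _|no_diff]; first by exists k.
have [i xy_i] : exists i, x 0 i != y 0 i.
  apply/existsP; apply: contraNT xy => /existsPn same.
  by apply/eqP/rowP => j; apply/eqP; rewrite -[_ == _]negbK same.
case: (@arg_minnP _ i (fun j => x 0 j != y 0 j) (@nat_of_ord d) xy_i) => k xy_k k_min.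
move/negP: (no_diff k); case; rewrite xy_k /=.
apply/forallP => j; apply/implyP; apply: contraTT => xy_j.
by rewrite -leqNgt k_min.
Qed.

Lemma color_spec_phi lt x y : x != y -> color_spec x y (phi lt x y).
Proof.
move=> /fdiff_some[k fdiff_k]; have xy_k := fdiff_neq fdiff_k.
rewrite /phi fdiff_k; case: ifP => _; first exact: color_spec_phi0.
by apply/color_specC/color_spec_phi0; rewrite eq_sym.
Qed.

Lemma color_spec_affine_hyperplane a b (X : seq 'rV[F]_d) c :
  allnz b -> color_spec a b c -> {in X, forall y, color_spec a y c} ->
  exists x, dotv x b != 0 /\ {in X, forall y, dotv x y = dotv x b}.
Proof.
move=> /forallP b_nz; case: c => [e|k t|k t|k t] /=.
- by case=> ab e_nz _ _ aX; exists a; rewrite ab; split=> // y /aX[].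
all: case=> ab _ aX; exists (delta_mx 0 k); rewrite !dotv_delta.
all: by split=> // y /aX[ay _]; apply: (addrI (a 0 k)); rewrite dotv_delta ay ab.
Qed.

Lemma color_spec_separating_hyperplane b y0 (X : seq 'rV[F]_d) c :
  y0 \in X -> {in X, forall y, color_spec b y c} ->
  exists x, dotv x b != dotv x y0 /\ {in X, forall y, dotv x y = dotv x y0}.
Proof.
move=> y0X bX; move: (bX _ y0X); case: c bX => [e|k t|k t|k t] bX /=.
- case=> by0 _ e_bb _; exists b; rewrite by0 eq_sym.
  by split=> // y /bX[].
all: case=> by0 b_y0; exists (delta_mx 0 k); rewrite !dotv_delta.
all: by split=> // y /bX[b_y _]; apply: (addrI (b 0 k)); rewrite dotv_delta b_y by0.
Qed.

End Colors.

Theorem lemma3p3 (F : finFieldType) (lt : rel F) (d : nat)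
  (s : seq 'rV[F]_d) (a b : 'rV[F]_d) :
  odd #|F| ->
  (0 < d)%N ->
  strict_linear_order_on_units lt ->
  all (@allnz F d) s -> allnz a -> allnz b ->
  free s ->
  a != b -> a \notin s -> b \notin s ->
  (exists alpha beta : color F d,
     phi lt a b = alpha /\
     (forall si, si \in s -> phi lt a si = alpha /\ phi lt b si = beta)) ->
  free (rcons s b).
Proof.
move=> _ d_gt0 _ _ _ b_nz free_s ab a_s b_s [alpha [beta [ab_alpha s_colors]]].
have -> : free (rcons s b) = free (b :: s) by apply/perm_free; rewrite perm_rcons.
rewrite free_cons free_s andbT.
apply/negP => b_span.
have [s0 s0s] : exists s0, s0 \in s.
  case: s b_span {free_s a_s b_s s_colors} => [|s0 s' _]; last by exists s0; exact: mem_head.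
  by rewrite span_nil memv0 (negPf (allnz_neq0 d_gt0 b_nz)).
have a_spec : {in s, forall y, color_spec a y alpha}.
  move=> y ys; rewrite -(s_colors y ys).1; apply: color_spec_phi.
  by apply: contraNneq a_s => ->.
have b_spec : {in s, forall y, color_spec b y beta}.
  move=> y ys; rewrite -(s_colors y ys).2; apply: color_spec_phi.
  by apply: contraNneq b_s => ->.
have ab_spec : color_spec a b alpha by rewrite -ab_alpha; apply: color_spec_phi.
have [x [xb_nz x_s]] := color_spec_affine_hyperplane b_nz ab_spec a_spec.
have [z [zb z_s]] := color_spec_separating_hyperplane s0s b_spec.
by move/eqP: zb; apply; apply: affine_span_scalar_const b_span s0s xb_nz x_s z_s.
Qed.
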